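(* Let $\Gamma=\langle g_1,\dots,g_n\mid r_0=e,r_1,\dots,r_m,\dots\rangle$ be a finitely generated group, where the relators $r_i$ are words in the free group $F_n=\langle g_1,\dots,g_n\rangle$ and $r_0=e$. For each $i$ let $\varphi_i\in\mathrm{Hom}_{\mathcal{H}}([n],[n+1])$ be the morphism corresponding to $(g_1,\dots,g_n,r_i)\in F_n^{\times(n+1)}$. Let $h^{[n]}=\mathrm{Hom}_{\mathcal{H}}([n],-)\colon\mathcal{H}\to\mathrm{Sets}$, and let $h^{[n]}/\{\varphi_i\}$ be the coequalizer in the category of functors $\mathcal{H}\to\mathrm{Sets}$ of the family of natural transformations $h^{[n+1]}\Rightarrow h^{[n]}$, $f\mapsto f\circ\varphi_i$. Then the functor $[\Gamma]\colon\mathcal{H}\to\mathrm{Sets}$ is isomorphic to $h^{[n]}/\{\varphi_i\}$.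
   Context: $\mathcal{H}$ is the PROP of cocommutative Hopf algebras: objects $[n]$, $n\in\mathbb{N}$, $[n]\otimes[m]=[n+m]$, morphisms generated by $\mu,\Delta,S,\eta,\varepsilon,\tau$ subject exactly to the cocommutative Hopf algebra axioms. There is an identification $\mathrm{Hom}_{\mathcal{H}}([n],[m])\simeq F_n^{\times m}$ (equivalently $\mathcal{H}$ is equivalent to the opposite of the category of finitely generated free groups, a morphism $[n]\to[m]$ corresponding to a homomorphism $F_m\to F_n$, i.e. to the tuple $(w_1,\dots,w_m)$ of images of the generators). Under it, composition corresponds to substitution of words. For a group $\Gamma$, $[\Gamma]\colon\mathcal{H}\to\mathrm{Sets}$ sends $[m]$ to $\Gamma^{\times m}$ and the morphism $(w_1,\dots,w_m)\in F_n^{\times m}$ to the map $\Gamma^{n}\to\Gamma^{m}$, $(\gamma_1,\dots,\gamma_n)\mapsto(w_1(\gamma_1,\dots,\gamma_n),\dots,w_m(\gamma_1,\dots,\gamma_n))$ (this is the set of group-like elements of the functor $[m]\mapsto k[\Gamma]^{\otimes m}$). The coequalizer of a family of parallel maps is the universal map making all of them equal. *)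

From HB Require Import structures.
From mathcomp Require Import all_boot.
Set Implicit Arguments. Unset Strict Implicit. Unset Printing Implicit Defensive.

(* A letter is a generator index together with a flag: false = g_i, true = g_i^-1. *)
Definition letter (n : nat) := ('I_n * bool)%type.
Definition linv n (x : letter n) : letter n := (x.1, ~~ x.2).
Definition word n := seq (letter n).
Definition winv n (w : word n) : word n := rev (map (@linv n) w).

Definition nadj n (a b : letter n) : bool := b != linv a.
Definition reducedb n (w : word n) : bool :=
  if w is x :: w' then path (@nadj n) x w' else true.

Definition push n (x : letter n) (w : word n) : word n :=
  if w is y :: w' then (if y == linv x then w' else x :: w) else [:: x].
Definition reduce n (w : word n) : word n := foldr (@push n) [::] w.

Lemma reducedb_push n (x : letter n) (w : word n) :
  reducedb w -> reducedb (push x w).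
Proof.
case: w => [|y w] //= Hw.
case: ifP => [_|/negbT Hy].
  by case: w Hw => //= z w /andP[_ ->].
by rewrite /= /nadj Hy Hw.
Qed.

Lemma reduce_reduced n (w : word n) : reducedb (reduce w).
Proof. by elim: w => [|x w IH] //=; apply: reducedb_push. Qed.

Definition FG n := {w : word n | reducedb w}.
Definition mkFG n (w : word n) : FG n := exist _ (reduce w) (reduce_reduced w).
Definition FGe n : FG n := exist _ [::] isT.
Definition FGgen n (i : 'I_n) : FG n := exist _ [:: (i, false)] isT.

Definition Hom (k l : nat) := {ffun 'I_l -> FG k}.

Definition subst k l (v : 'I_l -> FG k) (w : word l) : word k :=
  flatten (map (fun x : letter l => let u := val (v x.1) in
                                    if x.2 then winv u else u) w).

(* composition [k] --f--> [l] --h--> [p]  (i.e. h o f), by substitution *)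
Definition comp k l p (f : Hom k l) (h : Hom l p) : Hom k p :=
  [ffun j => mkFG (subst f (val (h j)))].

Definition idH k : Hom k k := [ffun j => FGgen j].

Record functorH := FunctorH {
  Fob :> nat -> Type;
  Fmap : forall k l, Hom k l -> Fob k -> Fob l;
  Fmap_id : forall k (x : Fob k), Fmap (idH k) x = x;
  Fmap_comp : forall k l p (f : Hom k l) (h : Hom l p) (x : Fob k),
      Fmap (comp f h) x = Fmap h (Fmap f x) }.

Record group := Group {
  gcar :> Type;
  gmul : gcar -> gcar -> gcar;
  ginv : gcar -> gcar;
  gone : gcar;
  gmulA : forall x y z, gmul x (gmul y z) = gmul (gmul x y) z;
  gmul1 : forall x, gmul gone x = x;
  gmulV : forall x, gmul (ginv x) x = gone }.

Definition evalw (G : group) n (g : 'I_n -> G) (w : word n) : G :=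
  foldr (fun (x : letter n) acc =>
           gmul (if x.2 then ginv (g x.1) else g x.1) acc) (gone G) w.

Inductive ncl n (r : nat -> FG n) : word n -> Prop :=
| ncl_nil : ncl r [::]
| ncl_conj i (u : word n) : ncl r (u ++ val (r i) ++ winv u)
| ncl_inv a : ncl r a -> ncl r (winv a)
| ncl_cat a b : ncl r a -> ncl r b -> ncl r (a ++ b).

Definition in_nclosure n (r : nat -> FG n) (w : FG n) :=
  exists a, ncl r a /\ reduce a = val w.

(* (G, g) is the group < g_1..g_n | r_0, r_1, ... >: the evaluation map
   F_n -> G, g_i |-> g i, is onto with kernel the normal closure of the r_i. *)
Definition presents (G : group) n (g : 'I_n -> G) (r : nat -> FG n) :=
  (forall x : G, exists w : FG n, evalw g (val w) = x) /\
  (forall w : FG n, evalw g (val w) = gone G <-> in_nclosure r w).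

Definition GamOb (G : group) (k : nat) := {ffun 'I_k -> G}.
Definition GamMap (G : group) k l (f : Hom k l) (x : GamOb G k) : GamOb G l :=
  [ffun j => evalw x (val (f j))].

Definition phi n (r : nat -> FG n) (i : nat) : Hom n n.+1 :=
  [ffun j : 'I_n.+1 => if insub (val j) is Some j' then FGgen j' else r i].

Definition nat_from_hn n (Fo : nat -> Type)
    (Fm : forall k l, Hom k l -> Fo k -> Fo l) (t : forall k, Hom n k -> Fo k) :=
  forall k l (f : Hom n k) (h : Hom k l), t l (comp f h) = Fm k l h (t k f).

Definition coequalizes n (r : nat -> FG n) (Fo : nat -> Type)
    (t : forall k, Hom n k -> Fo k) :=
  forall (i j k : nat) (f : Hom n.+1 k), t k (comp (phi r i) f) = t k (comp (phi r j) f).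

Definition nat_trans (Fo : nat -> Type) (Fm : forall k l, Hom k l -> Fo k -> Fo l)
    (Go : nat -> Type) (Gm : forall k l, Hom k l -> Go k -> Go l)
    (u : forall k, Fo k -> Go k) :=
  forall k l (h : Hom k l) (x : Fo k), u l (Fm k l h x) = Gm k l h (u k x).

Definition is_coequalizer n (r : nat -> FG n) (Qo : nat -> Type)
    (Qm : forall k l, Hom k l -> Qo k -> Qo l) (q : forall k, Hom n k -> Qo k) :=
  nat_from_hn Qm q /\ coequalizes r q /\
  forall (F : functorH) (t : forall k, Hom n k -> F k),
    nat_from_hn (@Fmap F) t -> coequalizes r t ->
    (exists u : forall k, Qo k -> F k,
        nat_trans Qm (@Fmap F) u /\ forall k (f : Hom n k), u k (q k f) = t k f) /\
    (forall u u' : forall k, Qo k -> F k,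
        nat_trans Qm (@Fmap F) u -> nat_trans Qm (@Fmap F) u' ->
        (forall k (f : Hom n k), u k (q k f) = t k f) ->
        (forall k (f : Hom n k), u' k (q k f) = t k f) ->
        forall k x, u k x = u' k x).

From Pilot Require Import Defs.
From mathcomp Require Import all_boot.
From Stdlib Require Import IndefiniteDescription.
Set Implicit Arguments. Unset Strict Implicit. Unset Printing Implicit Defensive.

(* Let q send f : [n] -> [k] to the values of its k words at the generators g.
   It is natural and coequalizes the phi_i, because every relator evaluates to
   the identity.  Conversely, a transformation t coequalizing the phi_i may
   multiply any coordinate of f on the left by a conjugate u r_i u^-1: compare
   t (h o phi_i) with t (h o phi_0) for a suitable h : [n+1] -> [k], and use
   r_0 = e.  Hence t is invariant under left multiplication of a coordinate by
   any element of the normal closure of the relators.  That normal closure is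
   the kernel of evaluation, so t is constant on the fibres of q, and as q is
   surjective t factors uniquely through q. *)

Section FreeReduction.
Variable n : nat.
Implicit Types (x : letter n) (s u a b : word n).

Lemma linvK x : linv (linv x) = x.
Proof. by case: x => i []. Qed.

Lemma winvK u : winv (winv u) = u.
Proof. by rewrite /winv map_rev revK -map_comp (eq_map linvK) map_id. Qed.

Lemma winv_cons x u : winv (x :: u) = winv u ++ [:: linv x].
Proof. by rewrite /winv /= rev_cons cats1. Qed.

Lemma reduce_id s : reducedb s -> reduce s = s.
Proof.
elim: s => //= x s IH red_xs.
rewrite IH; last by case: s red_xs {IH} => //= y s /andP[].
by case: s red_xs {IH} => //= y s /andP[/negbTE-> _].
Qed.

Lemma reduce_idem s : reduce (reduce s) = reduce s.
Proof. exact/reduce_id/reduce_reduced. Qed.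

Lemma pushK x s : reducedb s -> push x (push (linv x) s) = s.
Proof.
case: s => [|y s] /=; first by rewrite eqxx.
rewrite linvK; case: eqP => [->|_] red_s; last by rewrite /= eqxx.
by case: s red_s => //= z s /andP[/negbTE-> _].
Qed.

Lemma reduce_cat a b : reduce (a ++ b) = foldr (@push n) (reduce b) a.
Proof. exact: foldr_cat. Qed.

Lemma reduce_catr a b : reduce (a ++ reduce b) = reduce (a ++ b).
Proof. by rewrite !reduce_cat reduce_idem. Qed.

Lemma reduce_push_cat x s b : reduce (push x s ++ b) = push x (reduce (s ++ b)).
Proof.
case: s => [|y s] //=; case: eqP => [->|_] //=.
by rewrite pushK // reduce_reduced.
Qed.

Lemma reduce_catl a b : reduce (reduce a ++ b) = reduce (a ++ b).
Proof. by elim: a => //= x a IH; rewrite reduce_push_cat IH. Qed.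

Lemma reduce_cat_winv u b : reduce (u ++ winv u ++ b) = reduce b.
Proof.
elim: u b => //= x u IH b.
rewrite winv_cons -catA -cat1s IH /=.
by rewrite pushK // reduce_reduced.
Qed.

Lemma reduce_winvl u : reduce (winv u ++ u) = [::].
Proof. by have := reduce_cat_winv (winv u) [::]; rewrite winvK cats0. Qed.

Lemma mkFG_val (a : FG n) : mkFG (val a) = a.
Proof. exact/val_inj/reduce_id/valP. Qed.

Lemma mkFG_reduce_eq a b : reduce a = reduce b -> mkFG a = mkFG b.
Proof. by move=> eq_ab; apply: val_inj. Qed.

End FreeReduction.

Section Substitution.
Variables (k l : nat) (v : 'I_l -> FG k).

Definition subst_letter (x : letter l) : word k :=
  if x.2 then winv (val (v x.1)) else val (v x.1).

Lemma subst_cons x w : subst v (x :: w) = subst_letter x ++ subst v w.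
Proof. by []. Qed.

Lemma subst_cat a b : subst v (a ++ b) = subst v a ++ subst v b.
Proof. by rewrite /subst map_cat flatten_cat. Qed.

Lemma subst_letter_linv x : subst_letter (linv x) = winv (subst_letter x).
Proof. by case: x => i [] /=; rewrite /subst_letter /= ?winvK. Qed.

Lemma reduce_subst w : reduce (subst v (reduce w)) = reduce (subst v w).
Proof.
elim: w => //= x w IH.
rewrite subst_cons -reduce_catr -IH reduce_catr.
case: (reduce w) => [|y s] //=; case: eqP => [->|_] //=.
by rewrite subst_cons subst_letter_linv reduce_cat_winv.
Qed.

End Substitution.

Section GroupFacts.
Variable G : group.
Implicit Types x y : G.
Local Notation "x * y" := (gmul x y).
Local Notation "1" := (gone G).

Lemma gmulrV x : x * ginv x = 1.
Proof.
transitivity ((ginv (ginv x) * ginv x) * (x * ginv x)); first by rewrite gmulV gmul1.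
by rewrite -gmulA (gmulA (ginv x)) gmulV gmul1 gmulV.
Qed.

Lemma gmulr1 x : x * 1 = x.
Proof. by rewrite -(gmulV x) gmulA gmulrV gmul1. Qed.

Lemma ginv_unique x y : y * x = 1 -> ginv x = y.
Proof. by move=> yx1; rewrite -[ginv x]gmul1 -yx1 -gmulA gmulrV gmulr1. Qed.

Lemma ginvM x y : ginv (x * y) = ginv y * ginv x.
Proof. by apply: ginv_unique; rewrite -gmulA (gmulA (ginv x)) gmulV gmul1 gmulV. Qed.

Lemma ginv1 : ginv 1 = 1.
Proof. by apply: ginv_unique; rewrite gmul1. Qed.

Lemma ginvK x : ginv (ginv x) = x.
Proof. by apply: ginv_unique; rewrite gmulrV. Qed.

End GroupFacts.

Section Evaluation.
Variables (G : group) (n : nat) (g : 'I_n -> G).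
Implicit Types (a b : word n).
Local Notation "x * y" := (gmul x y).

Lemma evalw_cat a b : evalw g (a ++ b) = evalw g a * evalw g b.
Proof. by elim: a => [|x a IH] /=; rewrite ?gmul1 // IH gmulA. Qed.

Lemma evalw_winv a : evalw g (winv a) = ginv (evalw g a).
Proof.
elim: a => [|[i []] a IH]; rewrite ?ginv1 // winv_cons evalw_cat IH /=.
  by rewrite ginvM ginvK gmulr1.
by rewrite ginvM gmulr1.
Qed.

Lemma evalw_reduce a : evalw g (reduce a) = evalw g a.
Proof.
elim: a => //= x a <-; case: (reduce a) => [|y s] //=.
case: eqP => [->|_] //=.
by rewrite gmulA; case: x => i [] /=; rewrite ?gmulV ?gmulrV gmul1.
Qed.

End Evaluation.

Lemma evalw_ext (G : group) n (g g' : 'I_n -> G) w :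
  g =1 g' -> evalw g w = evalw g' w.
Proof. by move=> eq_g; elim: w => //= x w ->; rewrite eq_g. Qed.

Lemma evalw_subst (G : group) k l (g : 'I_k -> G) (v : 'I_l -> FG k) (w : word l) :
  evalw g (subst v w) = evalw (fun m => evalw g (val (v m))) w.
Proof.
elim: w => //= [[i b] w IH].
by rewrite subst_cons evalw_cat IH /subst_letter; case: b => /=; rewrite ?evalw_winv.
Qed.

Definition evalH (G : group) n (g : 'I_n -> G) k (f : Hom n k) : GamOb G k :=
  [ffun j => evalw g (val (f j))].

Lemma evalH_natural (G : group) n (g : 'I_n -> G) : nat_from_hn (@GamMap G) (evalH g).
Proof.
move=> k l f h; apply/ffunP => j; rewrite !ffunE /= evalw_reduce evalw_subst.
by apply: evalw_ext => m; rewrite ffunE.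
Qed.

Lemma evalH_surjective (G : group) n (g : 'I_n -> G) :
  (forall x : G, exists w : FG n, evalw g (val w) = x) ->
  forall k (x : GamOb G k), exists f : Hom n k, evalH g f = x.
Proof.
move=> surj k x; have [w evw] := fin_all_exists (fun j => surj (x j)).
by exists [ffun j => w j]; apply/ffunP => j; rewrite !ffunE.
Qed.

Lemma evalH_coequalizes (G : group) n (g : 'I_n -> G) (r : nat -> FG n) :
  (forall i, evalw g (val (r i)) = gone G) -> coequalizes r (evalH g).
Proof.
move=> rel1 i i' k f; apply/ffunP => j; rewrite !ffunE /= !evalw_reduce !evalw_subst.
by apply: evalw_ext => m; rewrite !ffunE; case: insub => [?|]; rewrite ?rel1.
Qed.

Lemma is_coequalizer_surjective n (r : nat -> FG n) (Qo : nat -> Type)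
    (Qm : forall k l, Hom k l -> Qo k -> Qo l) (q : forall k, Hom n k -> Qo k) :
  nat_from_hn Qm q -> coequalizes r q ->
  (forall k (x : Qo k), exists f, q k f = x) ->
  (forall (F : functorH) (t : forall k, Hom n k -> F k),
     nat_from_hn (@Fmap F) t -> coequalizes r t ->
     forall k (f f' : Hom n k), q k f = q k f' -> t k f = t k f') ->
  is_coequalizer r Qm q.
Proof.
move=> q_nat q_coeq q_surj q_fibres; split; [done | split; first done].
move=> F t t_nat t_coeq.
pose s k (x : Qo k) := proj1_sig (constructive_indefinite_description _ (q_surj k x)).
have qsK k x : q k (s k x) = x by rewrite /s; case: constructive_indefinite_description.
have t_fibres := q_fibres F t t_nat t_coeq.
split.
  exists (fun k x => t k (s k x)); split => [k l h x|k f]; last exact/t_fibres/qsK.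
  rewrite -t_nat; apply: t_fibres.
  by rewrite qsK q_nat qsK.
move=> u u' _ _ uq u'q k x.
by rewrite -(qsK k x) uq u'q.
Qed.

Section RelatorInvariance.
Variables (n : nat) (r : nat -> FG n).

Definition lmul_at k (j : 'I_k) (a : word n) (f : Hom n k) : Hom n k :=
  [ffun m => if m == j then mkFG (a ++ val (f m)) else f m].

Lemma lmul_at_nil k (j : 'I_k) a f : reduce a = [::] -> lmul_at j a f = f.
Proof.
move=> red_a; apply/ffunP => m; rewrite ffunE; case: eqP => // ->.
by rewrite -{2}(mkFG_val (f j)); apply: mkFG_reduce_eq; rewrite -reduce_catl red_a.
Qed.

Lemma lmul_atM k (j : 'I_k) a b f :
  lmul_at j a (lmul_at j b f) = lmul_at j (a ++ b) f.
Proof.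
apply/ffunP => m; rewrite !ffunE; case: eqP => // ->.
by apply: mkFG_reduce_eq; rewrite reduce_catr catA.
Qed.

Definition lift_word (w : word n) : word n.+1 :=
  map (fun x : letter n => (widen_ord (leqnSn n) x.1, x.2)) w.

Lemma winv_lift_word u : winv (lift_word u) = lift_word (winv u).
Proof. by rewrite /winv /lift_word map_rev -!map_comp. Qed.

Lemma subst_phi_lift_word i w : subst (phi r i) (lift_word w) = w.
Proof.
elim: w => //= x w IH; rewrite subst_cons IH /subst_letter /phi ffunE /=.
by rewrite valK; case: x => a [].
Qed.

Lemma subst_phi_last i : subst (phi r i) [:: (ord_max, false)] = val (r i).
Proof. by rewrite subst_cons cats0 /subst_letter /phi ffunE /= insubN // ltnn. Qed.

(* The last generator of [n+1] stands for the relator, so composing with phi_i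
   multiplies coordinate j of f by the conjugate u r_i u^-1. *)
Definition conj_at k (j : 'I_k) (u : word n) (f : Hom n k) : Hom n.+1 k :=
  [ffun m => if m == j then
     mkFG (lift_word u ++ (ord_max, false) :: winv (lift_word u) ++ lift_word (val (f j)))
   else mkFG (lift_word (val (f m)))].

Lemma comp_phi_conj_at i k (j : 'I_k) u f :
  Defs.comp (phi r i) (conj_at j u f) = lmul_at j (u ++ val (r i) ++ winv u) f.
Proof.
apply/ffunP => m; rewrite !ffunE; case: eqP => [->|_].
  apply: mkFG_reduce_eq; rewrite reduce_subst -cat1s winv_lift_word !subst_cat.
  by rewrite subst_phi_last !subst_phi_lift_word -!catA.
rewrite -[RHS]mkFG_val; apply: mkFG_reduce_eq.
by rewrite reduce_subst subst_phi_lift_word.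
Qed.

Hypothesis r0_nil : val (r 0) = [::].

Lemma coequalizes_lmul_at (T : nat -> Type) (t : forall k, Hom n k -> T k) a :
  coequalizes r t -> ncl r a ->
  forall k (j : 'I_k) f, t k (lmul_at j a f) = t k f.
Proof.
move=> t_coeq; elim=> [|i u|b _ IH|b c _ IHb _ IHc] k j f.
- by rewrite lmul_at_nil.
- rewrite -comp_phi_conj_at (t_coeq i 0) comp_phi_conj_at r0_nil lmul_at_nil //.
  by rewrite cat0s -[winv u]cats0 reduce_cat_winv.
- rewrite -(IH k j (lmul_at j (winv b) f)) lmul_atM lmul_at_nil //.
  by rewrite -{1}(winvK b) reduce_winvl.
- by rewrite -lmul_atM IHb IHc.
Qed.

End RelatorInvariance.

Section Presentation.
Variables (n : nat) (r : nat -> FG n) (G : group) (g : 'I_n -> G).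
Hypothesis eval_kernel : forall w : FG n, evalw g (val w) = gone G <-> in_nclosure r w.

Lemma evalw_relator i : evalw g (val (r i)) = gone G.
Proof.
apply/eval_kernel; exists ([::] ++ val (r i) ++ winv [::]); split; first exact: ncl_conj.
by rewrite cats0 reduce_id // valP.
Qed.

Lemma evalw_eq_ncl (u v : FG n) :
  evalw g (val u) = evalw g (val v) -> exists2 a, ncl r a & mkFG (a ++ val u) = v.
Proof.
move=> eq_uv; pose c := val v ++ winv (val u).
have [|a [ncl_a red_a]] := proj1 (eval_kernel (mkFG c)).
  by rewrite /= evalw_reduce evalw_cat evalw_winv -eq_uv gmulrV.
exists a => //; apply: val_inj => /=.
rewrite -reduce_catl red_a reduce_catl -catA -reduce_catr reduce_winvl cats0.
exact/reduce_id/valP.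
Qed.

Hypothesis r0_nil : val (r 0) = [::].

Lemma coequalizes_evalH_fibres (T : nat -> Type) (t : forall k, Hom n k -> T k) :
  coequalizes r t ->
  forall k (f f' : Hom n k), evalH g f = evalH g f' -> t k f = t k f'.
Proof.
move=> t_coeq k f f' /ffunP eq_ff'.
pose mix p : Hom n k := [ffun m : 'I_k => if m < p then f' m else f m].
suff mixE p : p <= k -> t k f = t k (mix p).
  by rewrite (mixE k (leqnn k)); apply: f_equal; apply/ffunP => m; rewrite ffunE ltn_ord.
elim: p => [_|p IH lt_pk].
  by apply: f_equal; apply/ffunP => m; rewrite ffunE ltn0.
pose j := Ordinal lt_pk.
have [a ncl_a a_fj] : exists2 a, ncl r a & mkFG (a ++ val (f j)) = f' j.
  by apply: evalw_eq_ncl; have := eq_ff' j; rewrite !ffunE.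
rewrite (IH (ltnW lt_pk)) -(coequalizes_lmul_at r0_nil t_coeq ncl_a j (mix p)).
apply: f_equal; apply/ffunP => m; rewrite !ffunE.
have [->|ne_mj] := eqVneq m j; first by rewrite /= ltnn ltnSn a_fj.
have ne_mp : (m : nat) != p by rewrite -[p]/(val j) val_eqE.
by rewrite [m < p.+1]ltnS [m <= p]leq_eqVlt (negbTE ne_mp).
Qed.

End Presentation.

Theorem lemma3p2 (n : nat) (r : nat -> FG n) (Gam : group) (g : 'I_n -> Gam) :
  val (r 0) = [::] ->
  presents g r ->
  exists q : forall k, Hom n k -> GamOb Gam k,
    is_coequalizer r (@GamMap Gam) q.
Proof.
move=> r0_nil [eval_surj eval_kernel]; exists (evalH g).
apply: is_coequalizer_surjective.
- exact: evalH_natural.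
- exact/evalH_coequalizes/evalw_relator.
- exact: evalH_surjective.
- by move=> F t _ t_coeq; apply: coequalizes_evalH_fibres.
Qed.
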